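(* Let $(U_0,\dots,U_n)$ be the urn process. For $0\le k\le l\le n$, \[ \mathbf E(U_k)=\frac{k(n-k)}{n-1},\qquad \mathbf{Cov}(U_k,U_l)=\frac{k(k-1)(n-l)(n-l-1)}{(n-1)^2(n-2)}. \]
   Context: Urn process: let $n\ge3$. An urn initially contains $n$ black balls. It is emptied in $n$ steps: in each of the first $n-1$ steps a uniformly random pair of balls is removed from the urn and replaced by one red ball; in step $n$ the last remaining ball is removed. $U_k$ is the number of red balls in the urn after $k$ steps, $0\le k\le n$. Equivalently, $(U_k)$ is the Markov chain with $U_0=0$ and $\mathbf P(U_{k+1}=u-1\mid U_k=u)=\binom u2/\binom{n-k}2$, $\mathbf P(U_{k+1}=u\mid U_k=u)=u(n-k-u)/\binom{n-k}2$, $\mathbf P(U_{k+1}=u+1\mid U_k=u)=\binom{n-k-u}2/\binom{n-k}2$ (for $k\le n-2$), and $U_n=0$. *)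

From HB Require Import structures.
From mathcomp Require Import all_boot all_order all_algebra.
Set Implicit Arguments. Unset Strict Implicit. Unset Printing Implicit Defensive.
Import Order.TTheory GRing.Theory Num.Theory.
Local Open Scope ring_scope.

Definition urn_trans (n k u v : nat) : rat :=
  if (k <= n - 2)%N then
    let N := (n - k)%N in
    (((v.+1 == u)%:R * 'C(u, 2)%:R
      + (v == u)%:R * (u * (N - u))%:R
      + (v == u.+1)%:R * 'C(N - u, 2)%:R) / 'C(N, 2)%:R)
  else (v == 0%N)%:R.

Fixpoint urn_kern (n k m u v : nat) : rat :=
  match m with
  | 0 => (u == v)%:R
  | m'.+1 => \sum_(w < n.+1) urn_kern n k m' u w * urn_trans n (k + m') w v
  end.

Definition urn_dist (n k u : nat) : rat := urn_kern n 0 k 0 u.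

(* Joint law: P(U_k = a, U_l = b) for k <= l (Markov property). *)
Definition urn_joint (n k l a b : nat) : rat :=
  urn_dist n k a * urn_kern n k (l - k) a b.

Definition urn_mean (n k : nat) : rat :=
  \sum_(u < n.+1) (u : nat)%:R * urn_dist n k u.

Definition urn_cov (n k l : nat) : rat :=
  \sum_(a < n.+1) \sum_(b < n.+1) ((a : nat) * (b : nat))%:R * urn_joint n k l a b
  - urn_mean n k * urn_mean n l.

From HB Require Import structures.
From mathcomp Require Import all_boot all_order all_algebra.
From mathcomp Require Import zify ring.
Set Implicit Arguments. Unset Strict Implicit. Unset Printing Implicit Defensive.
Import Order.TTheory GRing.Theory Num.Theory.
Local Open Scope ring_scope.

(* With N = n - t balls left and U_t = w, the step moves down, stays or moves
   up with probabilities C(w,2), w(N-w), C(N-w,2) over C(N,2).  Hence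
   E[g(U_(t+1)) | U_t = w] is a polynomial in w of degree deg g for g = 1, x,
   x^2: in particular E[U_(t+1) | U_t] = (1 - 2/N) U_t + 1.  Iterating gives
   E U_m, E U_m^2 and E[U_l | U_k = a] (affine in a) in closed form, and
   E[U_k U_l] = E[U_k E[U_l | U_k]] reduces the covariance to the first two
   moments of U_k.  The final step U_n = 0 needs no computation. *)

Lemma sum_ord_eq_indicator (R : pzSemiRingType) (n j : nat) (F : nat -> R) :
  \sum_(v < n.+1) ((v : nat) == j)%:R * F v = (j <= n)%:R * F j.
Proof.
case: (leqP j n) => hj.
  rewrite (bigD1 (Ordinal (hj : (j < n.+1)%N))) //= eqxx mul1r big1 ?addr0 // => v hv.
  by rewrite (_ : (v : nat) == j = false) ?mul0r //; apply: contraNF hv => /eqP vj; apply/eqP/val_inj.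
rewrite big1 ?mul0r // => v _.
by rewrite (_ : (v : nat) == j = false) ?mul0r //; apply/eqP => ej; have := ltn_ord v; lia.
Qed.

Lemma natr_bin2 (m : nat) : 'C(m, 2)%:R = m%:R * (m%:R - 1) / 2 :> rat.
Proof.
elim: m => [|m IH]; first by rewrite bin0n !mul0r.
by rewrite binS bin1 natrD IH -natr1; field.
Qed.

Lemma natr_mul_pred (R : pzRingType) (x : nat) : (x * (x - 1))%:R = x%:R * (x%:R - 1) :> R.
Proof. by case: x => [|x]; rewrite ?mul0r // natrM subn1 /= -natr1 addrK. Qed.

Lemma natr_sub_neq0 (a b : nat) : (b < a)%N -> a%:R - b%:R != 0 :> rat.
Proof. by move=> ba; rewrite subr_eq0 eqr_nat; lia. Qed.

Lemma natr_sub1_neq0 (a b : nat) : (b.+1 < a)%N -> a%:R - b%:R - 1 != 0 :> rat.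
Proof. by move=> ba; rewrite -addrA -opprD natr1 natr_sub_neq0. Qed.

Definition urn_expect (n k m u : nat) (f : nat -> rat) : rat :=
  \sum_(v < n.+1) f v * urn_kern n k m u v.

Definition urn_step (n t : nat) (f : nat -> rat) (w : nat) : rat :=
  \sum_(v < n.+1) urn_trans n t w v * f v.

Section UrnKernel.

Variable n : nat.

Lemma urn_expectS k m u f :
  urn_expect n k m.+1 u f = urn_expect n k m u (urn_step n (k + m) f).
Proof.
rewrite /urn_expect /=.
under eq_bigr => v _ do rewrite mulr_sumr.
rewrite exchange_big; apply: eq_bigr => w _.
by rewrite /urn_step mulr_suml; apply: eq_bigr => v _; rewrite mulrCA mulrC [f v * _]mulrC.
Qed.

Lemma urn_expect0 k u f : (u <= n)%N -> urn_expect n k 0 u f = f u.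
Proof.
move=> hu; rewrite /urn_expect /=.
under eq_bigr => v _ do rewrite eq_sym mulrC.
by rewrite sum_ord_eq_indicator hu mul1r.
Qed.

Lemma urn_expectD k m u f g :
  urn_expect n k m u (fun w => f w + g w) = urn_expect n k m u f + urn_expect n k m u g.
Proof. by rewrite /urn_expect -big_split; apply: eq_bigr => v _; rewrite mulrDl. Qed.

Lemma urn_expectZ k m u c f :
  urn_expect n k m u (fun w => c * f w) = c * urn_expect n k m u f.
Proof. by rewrite /urn_expect mulr_sumr; apply: eq_bigr => v _; rewrite mulrA. Qed.

Lemma urn_trans_support t w v :
  (w <= n - t)%N -> (n - t.+1 < v)%N -> urn_trans n t w v = 0.
Proof.
move=> hw hv; rewrite /urn_trans; case: ifP => _; last first.
  by rewrite (_ : v == 0%N = false) //; apply/eqP; lia.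
rewrite (_ : v.+1 == w = false) ?mul0r ?add0r; last by apply/eqP; lia.
case: (v =P w) => [vw | _].
  have -> : (n - t - w = 0)%N by lia.
  by rewrite muln0 bin0n /= !(mulr0, mul0r, add0r).
case: (v =P w.+1) => [vw | _]; last by rewrite !(mulr0, mul0r, add0r, addr0).
by rewrite bin_small ?(mulr0, mul0r, addr0) //; lia.
Qed.

Lemma urn_kern_support k m u v :
  (u <= n - k)%N -> (n - (k + m) < v)%N -> urn_kern n k m u v = 0.
Proof.
move=> hu; elim: m v => [|m IH] v hv /=.
  by rewrite (_ : u == v = false) //; apply/eqP; lia.
rewrite big1 // => w _; case: (leqP w (n - (k + m))) => hw; last by rewrite IH ?mul0r.
by rewrite urn_trans_support ?mulr0 // -addnS.
Qed.

Lemma eq_urn_expect k m u f g : (u <= n - k)%N ->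
  (forall w, (w <= n - (k + m))%N -> f w = g w) -> urn_expect n k m u f = urn_expect n k m u g.
Proof.
move=> hu efg; apply: eq_bigr => v _.
by case: (leqP v (n - (k + m))) => hv; [rewrite efg | rewrite urn_kern_support ?mulr0].
Qed.

Lemma urn_step_last t f w : (n - 2 < t)%N -> urn_step n t f w = f 0%N.
Proof.
move=> ht; rewrite /urn_step /urn_trans (_ : (t <= n - 2)%N = false); last by lia.
by rewrite sum_ord_eq_indicator mul1r.
Qed.

Lemma urn_expect_end k m u f :
  (n - 2 < k + m)%N -> f 0%N = 0 -> urn_expect n k m.+1 u f = 0.
Proof.
move=> ht f0; rewrite urn_expectS /urn_expect big1 // => v _.
by rewrite urn_step_last // f0 mul0r.
Qed.

End UrnKernel.

Section UrnFirstMoments.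

Variable n : nat.
Hypothesis n_ge2 : (2 <= n)%N.

Lemma urn_step_binomial t f w : (t <= n - 2)%N -> (w <= n - t)%N ->
  'C(n - t, 2)%:R * urn_step n t f w =
    'C(w, 2)%:R * f w.-1 + (w * (n - t - w))%:R * f w + 'C(n - t - w, 2)%:R * f w.+1.
Proof.
move=> ht hw; have hD : 'C(n - t, 2)%:R != 0 :> rat by rewrite pnatr_eq0 -lt0n bin_gt0; lia.
rewrite /urn_step /urn_trans ht mulr_sumr.
under eq_bigr => v _ do rewrite mulrA mulrCA mulfV // mulr1 !mulrDl ![_ * _ * f v]mulrAC.
rewrite !big_split -!mulr_suml /= !sum_ord_eq_indicator (_ : (w <= n)%N) ?mul1r; last by lia.
have -> : (\sum_(v < n.+1) (v.+1 == w)%:R * f v) * 'C(w, 2)%:R = 'C(w, 2)%:R * f w.-1.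
  case: w hw => [|w] hw; first by rewrite bin0n !mulr0 mul0r.
  under eq_bigr => v _ do rewrite eqSS.
  by rewrite sum_ord_eq_indicator (_ : (w <= n)%N) ?mul1r 1?mulrC //; lia.
case: (ltnP w n) => hwn; first by rewrite mul1r; ring.
have -> : (n - t - w = 0)%N by lia.
by rewrite muln0 bin0n /=; ring.
Qed.

Lemma urn_step_poly t (g : rat -> rat) w : (t <= n - 2)%N -> (w <= n - t)%N ->
  (n%:R - t%:R) * (n%:R - t%:R - 1) * urn_step n t (fun v => g v%:R) w =
    w%:R * (w%:R - 1) * g (w%:R - 1) + 2 * w%:R * (n%:R - t%:R - w%:R) * g w%:R
    + (n%:R - t%:R - w%:R) * (n%:R - t%:R - w%:R - 1) * g (w%:R + 1).
Proof.
move=> ht hw; have htn : (t <= n)%N by lia.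
have hpred : 'C(w, 2)%:R * g w.-1%:R = 'C(w, 2)%:R * g (w%:R - 1).
  by case: w {hw} => [|w] /=; rewrite ?bin0n ?mul0r // -natr1 addrK.
have := urn_step_binomial (fun v => g v%:R) ht hw; rewrite /= hpred.
rewrite !natr_bin2 natrM !natrB // -[w.+1%:R]natr1 => hbin.
by apply: (@mulIf _ 2^-1) => //; rewrite mulrAC hbin; field.
Qed.

Lemma urn_remaining_neq0 t : (t <= n - 2)%N ->
  n%:R - t%:R != 0 :> rat /\ n%:R - t%:R - 1 != 0 :> rat.
Proof. by move=> ht; split; [apply: natr_sub_neq0 | apply: natr_sub1_neq0]; lia. Qed.

Lemma urn_step_one t w : (t <= n - 2)%N -> (w <= n - t)%N ->
  urn_step n t (fun=> 1) w = 1.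
Proof.
move=> ht hw; have [hN hN1] := urn_remaining_neq0 ht.
apply: (mulfI (mulf_neq0 hN hN1)); rewrite (urn_step_poly (fun=> 1)) //.
by field.
Qed.

Lemma urn_step_id t w : (t <= n - 2)%N -> (w <= n - t)%N ->
  urn_step n t (fun v => v%:R) w = (1 - 2 / (n%:R - t%:R)) * w%:R + 1.
Proof.
move=> ht hw; have [hN hN1] := urn_remaining_neq0 ht.
apply: (mulfI (mulf_neq0 hN hN1)); rewrite (urn_step_poly id) //.
by field; rewrite hN.
Qed.

Lemma urn_step_sq t w : (t <= n - 2)%N -> (w <= n - t)%N ->
  urn_step n t (fun v => v%:R ^+ 2) w =
    (n%:R - t%:R - 2) * (n%:R - t%:R - 3) / ((n%:R - t%:R) * (n%:R - t%:R - 1)) * w%:R ^+ 2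
    + (2 * (n%:R - t%:R - 2) / (n%:R - t%:R - 1) * w%:R + 1).
Proof.
move=> ht hw; have [hN hN1] := urn_remaining_neq0 ht.
apply: (mulfI (mulf_neq0 hN hN1)); rewrite (urn_step_poly (fun x => x ^+ 2)) //.
by field; rewrite hN hN1.
Qed.

Lemma urn_expect_one k m u : (u <= n - k)%N -> (k + m <= n)%N ->
  urn_expect n k m u (fun=> 1) = 1.
Proof.
move=> hu; elim: m => [|m IH] hkm; first by rewrite urn_expect0 //; lia.
rewrite urn_expectS -[RHS]IH; last by lia.
apply: eq_urn_expect => // w hw.
case: (leqP (k + m) (n - 2)) => ht; first by rewrite urn_step_one //; lia.
by rewrite urn_step_last.
Qed.

Lemma urn_expect_mean m : (m <= n)%N ->
  urn_expect n 0 m 0 (fun v => v%:R) = m%:R * (n%:R - m%:R) / (n%:R - 1).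
Proof.
have hn1 : n%:R - 1 != 0 :> rat by rewrite subr_eq0 pnatr_eq1; lia.
elim: m => [|m IH] hm; first by rewrite urn_expect0 // !mul0r.
case: (leqP m (n - 2)) => hmn; last first.
  by rewrite urn_expect_end // (_ : m.+1 = n) ?subrr ?mulr0 ?mul0r //; lia.
rewrite urn_expectS add0n (eq_urn_expect (g := fun w => (1 - 2 / (n%:R - m%:R)) * w%:R + 1)) //;
  last by move=> w hw; rewrite urn_step_id //; lia.
have [hN _] := urn_remaining_neq0 hmn.
rewrite urn_expectD urn_expectZ urn_expect_one ?IH; try lia.
by field; rewrite hN hn1.
Qed.

Lemma urn_cond_mean k m a : (k.+1 < n)%N -> (k + m < n)%N -> (a <= n - k)%N ->
  urn_expect n k m a (fun v => v%:R) =
    (n%:R - k%:R - m%:R) * ((n%:R - k%:R - m%:R - 1) * a%:R + m%:R * (n%:R - k%:R))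
    / ((n%:R - k%:R) * (n%:R - k%:R - 1)).
Proof.
move=> hk hkm ha; have hk2 : (k <= n - 2)%N by lia.
have [hN hN1] := urn_remaining_neq0 hk2.
elim: m hkm => [|m IH] hkm.
  rewrite urn_expect0; last by lia.
  by field; rewrite hN hN1.
have ht : (k + m <= n - 2)%N by lia.
rewrite urn_expectS (eq_urn_expect (g := fun w => (1 - 2 / (n%:R - (k + m)%:R)) * w%:R + 1)) //;
  last by move=> w hw; rewrite urn_step_id //; lia.
have [hNm _] := urn_remaining_neq0 ht.
rewrite urn_expectD urn_expectZ urn_expect_one ?IH; try lia.
rewrite natrD in hNm *.
by field; rewrite hN hN1 hNm.
Qed.

End UrnFirstMoments.

Section UrnSecondMoments.

Variable n : nat.
Hypothesis n_ge3 : (3 <= n)%N.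
Let n_ge2 : (2 <= n)%N := ltnW n_ge3.

Let n_sub1_neq0 : n%:R - 1 != 0 :> rat.
Proof. by rewrite subr_eq0 pnatr_eq1; lia. Qed.

Let n_sub2_neq0 : n%:R - 2 != 0 :> rat.
Proof. by rewrite subr_eq0 eqr_nat; lia. Qed.

Lemma urn_expect_sq m : (m <= n)%N ->
  urn_expect n 0 m 0 (fun v => v%:R ^+ 2) =
    m%:R * (n%:R - m%:R) * ((m%:R - 1) * (n%:R - m%:R - 1) + m%:R * (n%:R - m%:R) * (n%:R - 2))
    / ((n%:R - 1) ^+ 2 * (n%:R - 2)).
Proof.
elim: m => [|m IH] hm; first by rewrite urn_expect0 // expr0n !mul0r.
case: (leqP m (n - 2)) => hmn; last first.
  by rewrite urn_expect_end ?expr0n // (_ : m.+1 = n) ?subrr ?mulr0 ?mul0r //; lia.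
have [hN hN1] := urn_remaining_neq0 n_ge2 hmn.
(* Without the ascription [: rat], [_ ^+ 2] below is elaborated at the unit
   ring instance of its coefficient and [IH] no longer rewrites. *)
rewrite urn_expectS add0n (eq_urn_expect (g := fun w =>
    ((n%:R - m%:R - 2) * (n%:R - m%:R - 3) / ((n%:R - m%:R) * (n%:R - m%:R - 1)) : rat) * w%:R ^+ 2
    + (2 * (n%:R - m%:R - 2) / (n%:R - m%:R - 1) * w%:R + 1))) //;
  last by move=> w hw; rewrite urn_step_sq //; lia.
rewrite !urn_expectD !urn_expectZ urn_expect_one ?IH ?urn_expect_mean //; try lia.
by field; rewrite hN hN1 n_sub1_neq0 n_sub2_neq0.
Qed.

Lemma urn_mixed_moment k l : (k <= l)%N -> (l <= n)%N ->
  urn_expect n 0 k 0 (fun a => a%:R * urn_expect n k (l - k) a (fun b => b%:R)) =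
    k%:R * ((k%:R - 1) * (n%:R - l%:R) * (n%:R - l%:R - 1)
            + (n%:R - k%:R) * l%:R * (n%:R - l%:R) * (n%:R - 2))
    / ((n%:R - 1) ^+ 2 * (n%:R - 2)).
Proof.
move=> hkl hln; case: (ltngtP k l) => [hlt | hgt | <-]; last 2 first.
- by exfalso; lia.
- rewrite subnn (eq_urn_expect (g := fun a => a%:R ^+ 2)) //; last first.
    by move=> a ha; rewrite urn_expect0 ?expr2 //; lia.
  rewrite urn_expect_sq; last by lia.
  by field; rewrite n_sub1_neq0 n_sub2_neq0.
case: (ltnP l n) => hl; last first.
  have -> : (l - k = (n - k - 1).+1)%N by lia.
  rewrite (eq_urn_expect (g := fun a => 0 * a%:R)) ?urn_expectZ ?mul0r //; last first.
    by move=> a ha; rewrite urn_expect_end ?mulr0 ?mul0r //; lia.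
  by rewrite (_ : l = n) ?subrr ?(mulr0, mul0r, addr0) //; lia.
have hk2 : (k <= n - 2)%N by lia.
have [hN hN1] := urn_remaining_neq0 n_ge2 hk2.
rewrite (eq_urn_expect (g := fun a =>
    (n%:R - k%:R - (l - k)%:R) * (n%:R - k%:R - (l - k)%:R - 1)
      / ((n%:R - k%:R) * (n%:R - k%:R - 1)) * a%:R ^+ 2
    + (n%:R - k%:R - (l - k)%:R) * (l - k)%:R / (n%:R - k%:R - 1) * a%:R)) //; last first.
  move=> a ha; rewrite urn_cond_mean; try lia.
  by field; rewrite hN hN1.
rewrite urn_expectD !urn_expectZ urn_expect_sq ?urn_expect_mean ?natrB //; try lia.
by field; rewrite hN hN1 n_sub1_neq0 n_sub2_neq0.
Qed.

End UrnSecondMoments.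

Lemma urn_meanE n k : urn_mean n k = urn_expect n 0 k 0 (fun v => v%:R).
Proof. by []. Qed.

Lemma urn_cov_expect n k l :
  \sum_(a < n.+1) \sum_(b < n.+1) ((a : nat) * (b : nat))%:R * urn_joint n k l a b =
  urn_expect n 0 k 0 (fun a => a%:R * urn_expect n k (l - k) a (fun b => b%:R)).
Proof.
apply: eq_bigr => a _; rewrite /urn_joint /urn_dist /urn_expect mulr_sumr mulr_suml.
by apply: eq_bigr => b _; rewrite natrM; ring.
Qed.

Theorem proposition6 (n k l : nat) (hn : (3 <= n)%N) (hkl : (k <= l)%N) (hln : (l <= n)%N) :
  urn_mean n k = (k * (n - k))%:R / (n - 1)%:R /\
  urn_cov n k l =
    (k * (k - 1) * (n - l) * (n - l - 1))%:R / ((n - 1) ^ 2 * (n - 2))%:R.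
Proof.
have hkn : (k <= n)%N by lia.
have hn1 : n%:R - 1 != 0 :> rat by rewrite subr_eq0 pnatr_eq1; lia.
have hn2 : n%:R - 2 != 0 :> rat by rewrite subr_eq0 eqr_nat; lia.
rewrite /urn_cov urn_cov_expect urn_mixed_moment // !urn_meanE !urn_expect_mean //; try lia.
split; first by rewrite natrM !natrB //; lia.
rewrite -mulnA [X in X / _]natrM !natr_mul_pred natrM natrX !natrB //; try lia.
by field; rewrite hn1 hn2.
Qed.
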